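(* Let $\nu=\sum_{k=1}^K p^{(k)}\nu^{(k)}$ be a mixture model on $\mathbb{R}^d$ satisfying the standing assumptions below, and suppose there is $\beta\in\mathbb{R}$ with $\beta\,\mathbb{E}_{x\sim\nu}[|x_i-\mu_i(x)|]\ge\sqrt{\mathbb{E}_{x\sim\nu}[|x_i-\mu_i(x)|^2]}$ for all $i\in[d]$. Let $q=ENR(\nu)>0$. Then the MMDT algorithm (described below) returns a decision tree with $$P_{x\sim\nu}\big(\hat\mu(x)\ne\mu(x)\big)\le\frac{(4+2\pi^2/3)\,\alpha K(K-1)}{q}.$$
   Context: Standing assumptions: $\nu=\sum_{k=1}^K p^{(k)}\nu^{(k)}$, $\sum_k p^{(k)}=1$, each $\nu^{(k)}$ a discrete or absolutely continuous probability distribution on $\mathbb{R}^d$ with mean $\mu^{(k)}$ and density/mass function symmetric about $\mu^{(k)}$; all components share finite coordinate-wise variances $\sigma_1^2,\dots,\sigma_d^2>0$; $p^{(k)}\le\alpha/K$ for all $k$ with fixed $\alpha\ge1$. For $x\sim\nu$ drawn from component $k$, $\mu(x)=\mu^{(k)}$. $ENR(\nu)=\min_{k\ne l}\max_{j\in[d]}|\mu^{(k)}_j-\mu^{(l)}_j|^2/\sigma_j^2$. MMDT algorithm: start with a single root node whose index set is $N=[K]$. Repeatedly, for each node with index set $N$, $|N|\ge2$: choose the axis $i(N)\in\arg\max_{i\in[d]}\sigma_i^{-1}\max_{k,l\in N}|\mu^{(k)}_i-\mu^{(l)}_i|$; with $\nu(N)=\sum_{k\in N}\bar p^{(k)}\nu^{(k)}$,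 $\bar p^{(k)}=p^{(k)}/\sum_{m\in N}p^{(m)}$, choose a threshold $\theta$ with $\min_{k\in N}\mu^{(k)}_i<\theta<\max_{k\in N}\mu^{(k)}_i$ minimizing $P_{x\sim\nu(N)}(x \text{ and } \mu(x) \text{ lie on opposite sides of the cut } x_i\le\theta)$ (ties broken randomly; when the exact densities are unknown, instead minimize the Chebyshev upper bound $\sum_{k\in N}\bar p^{(k)}\sigma_i^2|\mu^{(k)}_i-\theta|^{-2}$); split the node by the cut $x_i\le\theta$ into two children with index sets $\{k\in N:\mu^{(k)}_i\le\theta\}$ and $\{k\in N:\mu^{(k)}_i>\theta\}$. Stop when every leaf has a single index. The resulting tree partitions $\mathbb{R}^d$ into $K$ leaves each containing exactly one mean; $\hat\mu(x)$ denotes the mean $\mu^{(k)}$ lying in the same leaf as $x$. *)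

From HB Require Import structures.
From mathcomp Require Import all_boot all_order all_algebra.
From mathcomp Require Import all_classical all_reals all_analysis.
Set Implicit Arguments. Unset Strict Implicit. Unset Printing Implicit Defensive.
Import Order.TTheory GRing.Theory Num.Theory.
Import numFieldNormedType.Exports.
Local Open Scope classical_set_scope.
Local Open Scope ring_scope.

(* Points of R^d are d-tuples of reals; [d.-tuple R] carries the product
   (Borel) sigma-algebra generated by the coordinate projections. *)

Section MMDT.
Context {R : realType} {K d : nat}.

Definition xcoord (j : 'I_d) (x : d.-tuple R) : R := tnth x j.

Definition box (a b : d.-tuple R) : set (d.-tuple R) :=
  [set x | forall j : 'I_d, tnth a j <= tnth x j <= tnth b j].

Definition lebesgue_null (A : set (d.-tuple R)) : Prop :=
  forall eps : R, 0 < eps ->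
  exists a b : nat -> d.-tuple R,
    (forall n (j : 'I_d), tnth (a n) j <= tnth (b n) j) /\
    A `<=` \bigcup_n box (a n) (b n) /\
    (forall N : nat, \sum_(n < N) \prod_(j < d) (tnth (b n) j - tnth (a n) j) <= eps).

Definition discrete_law (P : probability (d.-tuple R) R) : Prop :=
  exists S : set (d.-tuple R), countable S /\ measurable S /\ P S = 1%E.

Definition abs_continuous_law (P : probability (d.-tuple R) R) : Prop :=
  forall A : set (d.-tuple R), measurable A -> lebesgue_null A -> P A = 0%E.

Definition reflect_about (m x : d.-tuple R) : d.-tuple R :=
  [tuple 2 * tnth m j - tnth x j | j < d].

(** the law P is symmetric about m (its density / mass function f satisfies
    f(m + v) = f(m - v)), stated as invariance under reflection about m *)
Definition symmetric_about (P : probability (d.-tuple R) R) (m : d.-tuple R) : Prop :=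
  forall A : set (d.-tuple R), measurable A -> P (reflect_about m @^-1` A) = P A.

(** ENR(nu) = min_{k<>l} max_j |mu^k_j - mu^l_j|^2 / sigma_j^2,
    with the conventions min over an empty set = +oo (K <= 1). *)
Definition pair_sep (mu : 'I_K -> d.-tuple R) (sigma : 'I_d -> R) (k l : 'I_K) : R :=
  \big[Num.max/0]_(j < d) (`|tnth (mu k) j - tnth (mu l) j| ^+ 2 / sigma j ^+ 2).

Definition ENR (mu : 'I_K -> d.-tuple R) (sigma : 'I_d -> R) : \bar R :=
  \big[Order.min/+oo%E]_(k < K) \big[Order.min/+oo%E]_(l < K | l != k)
     (pair_sep mu sigma k l)%:E.

Inductive dtree : Type :=
| DLeaf of 'I_K
| DNode of 'I_d & R & dtree & dtree.  (* left child: x_i <= theta *)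

Fixpoint leaf_of (t : dtree) (x : d.-tuple R) : 'I_K :=
  match t with
  | DLeaf k => k
  | DNode i th tl tr => if tnth x i <= th then leaf_of tl x else leaf_of tr x
  end.

Variables (p : 'I_K -> R) (mu : 'I_K -> d.-tuple R) (sigma : 'I_d -> R)
          (nu : 'I_K -> probability (d.-tuple R) R).

Definition axis_score (N : {set 'I_K}) (i : 'I_d) : R :=
  (sigma i)^-1 * \big[Num.max/0]_(k in N) \big[Num.max/0]_(l in N)
                    `|tnth (mu k) i - tnth (mu l) i|.

Definition admissible_threshold (N : {set 'I_K}) (i : 'I_d) (th : R) : Prop :=
  (exists2 k, k \in N & tnth (mu k) i < th) /\
  (exists2 l, l \in N & th < tnth (mu l) i).

Definition pbar (N : {set 'I_K}) (k : 'I_K) : R := p k / \sum_(m in N) p m.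

Definition split_error (N : {set 'I_K}) (i : 'I_d) (th : R) : \bar R :=
  (\sum_(k in N) (pbar N k)%:E *
     nu k [set x | ((tnth x i <= th) != (tnth (mu k) i <= th))%R])%E.

Definition cheb_bound (N : {set 'I_K}) (i : 'I_d) (th : R) : \bar R :=
  (\sum_(k in N) (pbar N k)%:E *
     (if (tnth (mu k) i == th)%R then +oo
      else (sigma i ^+ 2 / `|tnth (mu k) i - th| ^+ 2)%:E))%E.

(** split criterion: exact misclassification (cheb = false) or its
    Chebyshev upper bound (cheb = true, densities unknown) *)
Definition split_crit (cheb : bool) (N : {set 'I_K}) (i : 'I_d) (th : R) : \bar R :=
  if cheb then cheb_bound N i th else split_error N i th.

(** [mmdt_run cheb N t]: t is a possible output (over all random tie-breaks)
    of the MMDT algorithm started on a node with index set N. *)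
Inductive mmdt_run (cheb : bool) : {set 'I_K} -> dtree -> Prop :=
| mmdt_leaf (k : 'I_K) : mmdt_run cheb [set k] (DLeaf k)
| mmdt_node (N : {set 'I_K}) (i : 'I_d) (th : R) (tl tr : dtree) :
    (1 < #|N|)%N ->
    (forall i' : 'I_d, axis_score N i' <= axis_score N i) ->
    admissible_threshold N i th ->
    (forall th' : R, admissible_threshold N i th' ->
       (split_crit cheb N i th <= split_crit cheb N i th')%E) ->
    mmdt_run cheb [set k in N | tnth (mu k) i <= th] tl ->
    mmdt_run cheb [set k in N | th < tnth (mu k) i] tr ->
    mmdt_run cheb N (DNode i th tl tr).

(** E_{x ~ nu}[ f_k(x) ] where k is the component x is drawn from *)
Definition mix_expect (f : 'I_K -> d.-tuple R -> R) : \bar R :=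
  (\sum_(k < K) (p k)%:E * 'E_(nu k)[f k])%E.

(** P_{x ~ nu}(E_k holds of x), k the component x is drawn from *)
Definition mix_prob (E : 'I_K -> set (d.-tuple R)) : \bar R :=
  (\sum_(k < K) (p k)%:E * nu k (E k))%E.

End MMDT.

From HB Require Import structures.
From mathcomp Require Import all_boot all_order all_algebra.
From mathcomp Require Import all_classical all_reals all_analysis.
From mathcomp Require Import ring lra zify.
Set Implicit Arguments.
Unset Strict Implicit.
Unset Printing Implicit Defensive.
Import Order.TTheory GRing.Theory Num.Theory.
Import numFieldNormedType.Exports.
Local Open Scope classical_set_scope.
Local Open Scope ring_scope.

(* A point x of component k lands in a wrong leaf only if some cut on its path
   separates x from its mean mu^k; by symmetry and Chebyshev this has
   probability at most sigma_i^2 / (2 (mu^k_i - theta)^2).  Under either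
   criterion the chosen cut costs at most half the Chebyshev bound at the best
   centre theta of a grid of 2 (n - 1) cells between two means of the node, and a telescoping argument bounds the inverse-square
   sum at that centre by 40 (n - 1)^2 / D^2.  The axis choice and the ENR make
   D^2 >= q sigma_i^2, so a node with n means costs at most 20 w (n - 1)^2 / q
   when every weight is at most w, and induction on the tree gives
   (20/3) w n^2 (n - 1) / q; for w = alpha / K and n = K this is below the
   claimed bound as 20/3 <= 4 + 2 pi^2 / 3. *)

Section InverseSquareSums.
Variable R : realFieldType.
Implicit Types (s x y u : R).

(* A bounded nondecreasing function whose increment over [s - 1/2, s + 1/2]
   dominates s^-2 as soon as |s| >= 1/2: telescoping it bounds sums of inverse
   squares over unit-spaced points. *)
Definition isq_potential x : R :=
  if 1 <= x then - x^-1 else if -1 <= x then 4 * x - 5 else -10 - x^-1.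

Lemma isq_potential_ge1 x : 1 <= x -> isq_potential x = - x^-1.
Proof. by rewrite /isq_potential => ->. Qed.

Lemma isq_potential_mid x : -1 <= x <= 1 -> isq_potential x = 4 * x - 5.
Proof.
move=> /andP[x_ge x_le]; rewrite /isq_potential x_ge; case: ifP => // x_ge1.
have -> : x = 1 by apply/eqP; rewrite eq_le x_le x_ge1.
by rewrite invr1; lra.
Qed.

Lemma isq_potential_lem1 x : x <= -1 -> isq_potential x = -10 - x^-1.
Proof.
move=> x_le; rewrite /isq_potential; case: ifP => x_ge1; first lra.
case: ifP => // x_ge.
have -> : x = -1 by apply/eqP; rewrite eq_le x_le x_ge.
by rewrite invrN invr1; lra.
Qed.

Lemma isq_potentialN x : isq_potential (- x) = -10 - isq_potential x.
Proof.
have [x_ge1|x_lt1] := lerP 1 x.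
  by rewrite (isq_potential_ge1 x_ge1) isq_potential_lem1 ?invrN; lra.
have [x_gem1|x_ltm1] := lerP (-1) x.
  by rewrite !isq_potential_mid; [lra | apply/andP; split; lra..].
by rewrite [isq_potential x]isq_potential_lem1 ?isq_potential_ge1 ?invrN; lra.
Qed.

Lemma isq_potential_bounds x : -10 <= isq_potential x <= 0.
Proof.
wlog x_ge0 : x / 0 <= x.
  move=> H; have [/H //|x_lt0] := lerP 0 x.
  by have := H (- x) ltac:(lra); rewrite isq_potentialN; lra.
have [x_ge1|x_lt1] := lerP 1 x.
  rewrite isq_potential_ge1 //.
  have : x^-1 <= 1 by rewrite invf_le1; lra.
  have : 0 < x^-1 by rewrite invr_gt0; lra.
  lra.
by rewrite isq_potential_mid; [lra | apply/andP; split; lra].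
Qed.

Lemma isq_potential_nondecreasing : {homo isq_potential : x y / x <= y}.
Proof.
move=> x y; wlog y_ge0 : x y / 0 <= y.
  move=> H xy; have [y_ge0|y_lt0] := lerP 0 y; first exact: H.
  by have := H (- y) (- x) ltac:(lra) ltac:(lra); rewrite !isq_potentialN; lra.
have lem1_le z : z <= -1 -> isq_potential z <= -9.
  move=> z_le; rewrite isq_potential_lem1 //.
  have : (- z)^-1 <= 1 by rewrite invf_le1; lra.
  rewrite invrN; lra.
have le1_le z : z <= 1 -> isq_potential z <= -1.
  move=> z_le1; have [z_gem1|/ltW/lem1_le] := lerP (-1) z; last lra.
  by rewrite isq_potential_mid; [lra | apply/andP; split].
move=> xy; have [y_ge1|y_lt1] := lerP 1 y.
  rewrite [isq_potential y]isq_potential_ge1 //.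
  have [x_ge1|x_lt1] := lerP 1 x.
    by rewrite isq_potential_ge1 // lerN2 lef_pV2 ?posrE //; lra.
  have : y^-1 <= 1 by rewrite invf_le1; lra.
  by have := le1_le x (ltW x_lt1); lra.
rewrite [isq_potential y]isq_potential_mid; last by apply/andP; split; lra.
have [x_gem1|x_ltm1] := lerP (-1) x.
  by rewrite isq_potential_mid; [lra | apply/andP; split; lra].
by have := lem1_le x (ltW x_ltm1); lra.
Qed.

Lemma inv_sqr_le_isq_potentialD s :
  1/2 <= `|s| -> (s^+2)^-1 <= isq_potential (s + 1/2) - isq_potential (s - 1/2).
Proof.
wlog s_ge0 : s / 0 <= s.
  move=> H; have [/H //|s_lt0] := lerP 0 s.
  move: (H (- s) ltac:(lra)); rewrite normrN sqrrN.
  have -> : - s + 1/2 = - (s - 1/2) by ring.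
  have -> : - s - 1/2 = - (s + 1/2) by ring.
  by rewrite !isq_potentialN; lra.
rewrite ger0_norm // => s_ge; rewrite isq_potential_ge1; last lra.
have [s_ge3|s_lt3] := lerP (3/2) s.
  rewrite isq_potential_ge1; last lra.
  have -> : - (s + 1/2)^-1 - - (s - 1/2)^-1 = (s^+2 - 1/4)^-1.
    by field; repeat (apply/andP; split); apply/eqP => ?; nra.
  rewrite lef_pV2 ?posrE; nra.
rewrite isq_potential_mid; last by apply/andP; split; lra.
rewrite -subr_ge0.
have -> : - (s + 1/2)^-1 - (4 * (s - 1/2) - 5) - (s^+2)^-1 =
    (s - 1/2) * (1/4 + 4 * ((3/2 - s) * (s + 1/4) * (s + 1/2))) / (s^+2 * (s + 1/2)).
  by field; apply/andP; split; apply/eqP => ?; nra.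
apply: divr_ge0; last by apply: mulr_ge0; [exact: sqr_ge0 | lra].
apply: mulr_ge0; first lra.
have : 0 <= (3/2 - s) * (s + 1/4) * (s + 1/2) by rewrite !mulr_ge0 //; lra.
lra.
Qed.

Lemma sum_inv_sqr_grid_le (m : nat) u (E : {set 'I_m}) :
  {in E, forall j : 'I_m, 1/2 <= `|j%:R + 1/2 - u|} ->
  \sum_(j in E) ((j%:R + 1/2 - u)^+2)^-1 <= 10.
Proof.
move=> E_far.
pose V (j : nat) := isq_potential (j%:R - u).
apply: (@le_trans _ _ (\sum_(j < m) (V j.+1 - V j))).
  rewrite big_mkcond /=; apply: ler_sum => j _; case: ifP => [jE|_].
    have := inv_sqr_le_isq_potentialD (E_far j jE).
    rewrite /V -[j.+1%:R]natr1.
    have -> : j%:R + 1/2 - u + 1/2 = j%:R + 1 - u by lra.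
    by have -> : j%:R + 1/2 - u - 1/2 = j%:R - u by lra.
  by rewrite subr_ge0 /V; apply: isq_potential_nondecreasing; rewrite lerD2r ler_nat.
rewrite -(big_mkord xpredT (fun j => V j.+1 - V j)) telescope_sumr //.
have := isq_potential_bounds (m%:R - u).
by have := isq_potential_bounds (0%:R - u); rewrite /V; lra.
Qed.
End InverseSquareSums.

Section GridThreshold.
Variable R : realFieldType.

Definition grid_center (a h : R) (j : nat) : R := a + (j%:R + 1/2) * h.

Lemma grid_center_near_inj (a h x : R) (j j' : nat) : 0 < h ->
  `|x - grid_center a h j| < h / 2 -> `|x - grid_center a h j'| < h / 2 -> j = j'.
Proof.
move=> h_gt0; wlog jj' : j j' / (j <= j')%N.
  move=> H near_j near_j'; case/orP: (leq_total j j') => [/H|/H eq_j'j]; first exact.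
  exact/esym/eq_j'j.
move=> /ltr_normlP[l1 l2] /ltr_normlP[l3 l4]; apply/eqP; rewrite eqn_leq jj' /=.
rewrite leqNgt; apply/negP => lt_jj'.
have : (j%:R + 1) * h <= j'%:R * h by rewrite ler_pM2r // natr1 ler_nat.
by move: l1 l2 l3 l4; rewrite /grid_center; lra.
Qed.

Lemma grid_center_bounds (a h : R) (m j : nat) : 0 < h -> (j < m)%N ->
  a + h / 2 <= grid_center a h j <= a + m%:R * h - h / 2.
Proof.
move=> h_gt0 jm; rewrite /grid_center.
have : 0 <= j%:R * h by rewrite mulr_ge0 // ltW.
have : (j%:R + 1) * h <= m%:R * h by rewrite ler_pM2r // natr1 ler_nat.
by move=> *; apply/andP; split; lra.
Qed.

Definition grid_far (I : finType) (N : {set I}) (z : I -> R) (a h : R) (m : nat)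
    : {set 'I_m} :=
  [set j : 'I_m | [forall k in N, h / 2 <= `|z k - grid_center a h j|]]%SET.
Arguments grid_far {I} N z a h m.

(* A grid cell can only be spoilt by a point within h/2 of its centre, such a
   point spoils at most one cell, and the two end points spoil none. *)
Lemma card_grid_far (I : finType) (N : {set I}) (z : I -> R) (a h : R) (m : nat)
    (k1 k2 : I) :
  0 < h -> k1 \in N -> k2 \in N -> k1 != k2 -> z k1 = a -> z k2 = a + m%:R * h ->
  (m <= #|grid_far N z a h m| + #|N|.-2)%N.
Proof.
move=> h_gt0 k1N k2N k12 zk1 zk2; set F := grid_far N z a h m.
pose near (j : 'I_m) k := `|z k - grid_center a h j| < h / 2.
pose w j := odflt k1 [pick k in N | near j k].
have w_near j : j \in ~: F -> w j \in N /\ near j (w j).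
  rewrite !inE => /forall_inPn[k kN /negP k_near].
  rewrite /w; case: pickP => [k' /andP[] //|/(_ k)].
  by rewrite kN /near ltNge => /negP.
have w_mid j : j \in ~: F -> w j \in N :\ k1 :\ k2.
  move=> jF; have [wN w_nr] := w_near j jF.
  have /andP[lo hi] := grid_center_bounds a h_gt0 (ltn_ord j).
  rewrite !inE wN andbT; apply/andP; split; apply/eqP => wj; move: w_nr;
    by rewrite /near wj ?zk1 ?zk2 => /ltr_normlP[]; lra.
have w_inj : {in ~: F &, injective w}.
  move=> j j' jF j'F wjj'; have [_ near_j] := w_near j jF.
  have [_ near_j'] := w_near j' j'F; rewrite wjj' in near_j.
  exact/val_inj/(grid_center_near_inj h_gt0 near_j near_j').
have card_mid : #|N :\ k1 :\ k2| = #|N|.-2.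
  have := cardsD1 k2 (N :\ k1); rewrite (cardsD1 k1 N) k1N !inE eq_sym k12 k2N /=.
  lia.
have : (#|~: F| <= #|N|.-2)%N.
  rewrite -card_mid -(card_in_imset w_inj); apply: subset_leq_card.
  by apply/fintype.subsetP => _ /imsetP[j jF ->]; exact: w_mid.
by have := cardsC F; rewrite card_ord; lia.
Qed.

Lemma sum_inv_sqr_grid_far (a h x : R) (m : nat) (E : {set 'I_m}) : 0 < h ->
  {in E, forall j : 'I_m, h / 2 <= `|x - grid_center a h j|} ->
  \sum_(j in E) ((x - grid_center a h j)^+2)^-1 <= 10 / h^+2.
Proof.
move=> h_gt0 E_far; set u := (x - a) / h.
have rescale (j : 'I_m) : x - grid_center a h j = - h * (j%:R + 1/2 - u).
  by rewrite /grid_center /u; field; rewrite gt_eqF.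
under eq_bigr => j _ do rewrite rescale mulNr sqrrN exprMn invfM.
rewrite -mulr_sumr mulrC ler_pM2r ?invr_gt0 ?exprn_gt0 //.
apply: sum_inv_sqr_grid_le => j /E_far.
rewrite rescale normrM normrN (gtr0_norm h_gt0).
have -> : h / 2 = h * (1/2) by field.
by rewrite ler_pM2l.
Qed.

Lemma exists_mul_card_le_sum (I : finType) (E : {set I}) (f : I -> R) :
  (0 < #|E|)%N -> exists2 j, j \in E & #|E|%:R * f j <= \sum_(i in E) f i.
Proof.
case/card_gt0P => j0 j0E; case: (arg_minP f j0E) => j jE j_min.
by exists j => //; rewrite mulr_natl -sumr_const; apply: ler_sum => i /j_min.
Qed.

(* Grid of 2 (|N| - 1) cells of width h on [z k1, z k2]: at least |N| of them
   are far from every point, and averaging the inverse-square sums over those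
   cells yields a centre th with a sum of at most 10 / h^2. *)
Lemma exists_threshold_sum_inv_sqr_le (I : finType) (N : {set I}) (z : I -> R)
    (k1 k2 : I) :
  k1 \in N -> k2 \in N -> z k1 < z k2 ->
  exists th, [/\ z k1 < th < z k2, {in N, forall k, z k != th} &
    \sum_(k in N) ((z k - th)^+2)^-1 <= 40 * (#|N|%:R - 1)^+2 / (z k2 - z k1)^+2].
Proof.
move=> k1N k2N z12; set n := #|N|; set D := z k2 - z k1.
have D_gt0 : 0 < D by rewrite subr_gt0.
have k12 : k1 != k2 by apply: contraTneq z12 => ->; rewrite ltxx.
have n_ge2 : (1 < n)%N by apply/card_gt1P; exists k1, k2.
set m := (2 * n.-1)%N.
have mR : m%:R = 2 * (n%:R - 1) :> R by rewrite natrM -subn1 natrB //; lia.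
have m_gt0 : 0 < m%:R :> R by rewrite ltr0n; lia.
set h := D / m%:R; have h_gt0 : 0 < h by rewrite divr_gt0.
have zk2 : z k2 = z k1 + m%:R * h by rewrite /h /D; field; rewrite gt_eqF.
set F := grid_far N z (z k1) h m.
have cardF : (n <= #|F|)%N.
  by have := card_grid_far h_gt0 k1N k2N k12 erefl zk2; rewrite -/F /m; lia.
pose f (j : 'I_m) := \sum_(k in N) ((z k - grid_center (z k1) h j)^+2)^-1.
have /(exists_mul_card_le_sum f)[j jF fj_le] : (0 < #|F|)%N by lia.
have sumF : \sum_(j in F) f j <= n%:R * (10 / h^+2).
  rewrite /f exchange_big /= mulr_natl /n -sumr_const; apply: ler_sum => k kN.
  by apply: sum_inv_sqr_grid_far => // j'; rewrite inE => /forall_inP/(_ k kN).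
exists (grid_center (z k1) h j); split.
- have /andP[lo hi] := grid_center_bounds (z k1) h_gt0 (ltn_ord j).
  by rewrite zk2; apply/andP; split; lra.
- move=> k kN; move: jF; rewrite inE => /forall_inP/(_ k kN).
  by apply: contraTneq => ->; rewrite subrr normr0 -ltNge divr_gt0.
- have f_le : f j <= 10 / h^+2.
    have n_gt0 : 0 < n%:R :> R by rewrite ltr0n; lia.
    rewrite -(ler_pM2l n_gt0); apply: le_trans sumF; apply: le_trans fj_le.
    by apply: ler_wpM2r; [apply: sumr_ge0 => k _; rewrite invr_ge0 sqr_ge0 | rewrite ler_nat].
  have n1_gt0 : 0 < n%:R - 1 :> R by rewrite subr_gt0 ltr1n.
  suff -> : 40 * (n%:R - 1)^+2 / D^+2 = 10 / h^+2 by [].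
  by rewrite /h mR; field; rewrite !gt_eqF.
Qed.
End GridThreshold.

Section SymmetricTails.
Variables (R : realType) (d : nat).
Implicit Types (P : probability (d.-tuple R) R) (m : d.-tuple R) (i : 'I_d).

Lemma measurable_xcoord i : measurable_fun [set: d.-tuple R] (@xcoord R d i).
Proof. exact: measurable_tnth. Qed.

HB.instance Definition _ i :=
  isMeasurableFun.Build _ _ _ _ (@xcoord R d i) (measurable_xcoord i).

Lemma measurable_coord_le i (a : R) : measurable [set x : d.-tuple R | tnth x i <= a].
Proof.
have := measurable_xcoord i measurableT (measurable_itv `]-oo, a]).
by rewrite setTI; congr measurable; apply/seteqP; split => x; rewrite /= in_itv.
Qed.

Lemma measurable_coord_ge i (a : R) : measurable [set x : d.-tuple R | a <= tnth x i].
Proof.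
have := measurable_xcoord i measurableT (measurable_itv `[a, +oo[).
by rewrite setTI; congr measurable; apply/seteqP; split => x; rewrite /= in_itv andbT.
Qed.

Definition cut_miss i (th : R) m : set (d.-tuple R) :=
  [set x | (tnth x i <= th) != (tnth m i <= th)].

Lemma measurable_cut_miss i th m : measurable (cut_miss i th m).
Proof.
rewrite /cut_miss; case: (tnth m i <= th).
  have -> : [set x : d.-tuple R | (tnth x i <= th) != true] =
      ~` [set x | tnth x i <= th] by apply/seteqP; split => x /=; case: (_ <= _).
  exact: measurableC (measurable_coord_le _ _).
have -> : [set x : d.-tuple R | (tnth x i <= th) != false] = [set x | tnth x i <= th].
  by apply/seteqP; split => x /=; case: (_ <= _).
exact: measurable_coord_le.
Qed.

Lemma symmetric_tailN P m i (t : R) : symmetric_about P m ->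
  P [set x | tnth x i <= tnth m i - t] = P [set x | tnth m i + t <= tnth x i].
Proof.
move=> /(_ _ (measurable_coord_ge i (tnth m i + t))) <-; congr (P _).
by apply/seteqP; split => x; rewrite /preimage /= /reflect_about tnth_mktuple; lra.
Qed.

(* Chebyshev bounds the two tails together; symmetry makes them equal. *)
Lemma symmetric_tail_le P m i (s t : R) :
  symmetric_about P m -> ('E_P[xcoord i] = (tnth m i)%:E)%E ->
  variance P (xcoord i) = (s^+2)%:E -> 0 < t ->
  (P [set x | (tnth m i + t <= tnth x i)%R] <= (s^+2 / (2 * t^+2))%:E)%E.
Proof.
move=> Psym mean var t_gt0.
set U := [set x | tnth m i + t <= tnth x i].
set L := [set x | tnth x i <= tnth m i - t].
have := @chebyshev _ _ _ P (xcoord i) _ t_gt0; rewrite mean var /=.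
have -> : [set x | t <= `|xcoord i x - tnth m i|] = U `|` L.
  apply/seteqP; split => x; rewrite /U /L /xcoord /=.
    by case: (lerP 0 (tnth x i - tnth m i)) => [/ger0_norm|/ltr0_norm] ->;
      [left | right]; lra.
  by move=> [] ?; [rewrite ger0_norm | rewrite ltr0_norm]; lra.
rewrite measureU; first last.
- by apply/seteqP; split => x //; rewrite /U /L /= => -[]; lra.
- exact: measurable_coord_le.
- exact: measurable_coord_ge.
move=> cheb; have {cheb} : (P U + P U <= (t ^- 2)%:E * (s ^+ 2)%:E)%E.
  by move: cheb; congr (_ + _ <= _)%E; exact: symmetric_tailN.
have /fineK <- : P U \is a fin_num by apply: fin_num_measure; exact: measurable_coord_ge.
rewrite -EFinD -EFinM !lee_fin => cheb.
rewrite ler_pdivlMr ?mulr_gt0 ?exprn_gt0 //.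
have := ler_wpM2r (ltW (exprn_gt0 2 t_gt0)) cheb.
have -> : t ^- 2 * s ^+ 2 * t ^+ 2 = s ^+ 2 by field; rewrite gt_eqF.
lra.
Qed.

Lemma cut_miss_le P m i (s th : R) :
  symmetric_about P m -> ('E_P[xcoord i] = (tnth m i)%:E)%E ->
  variance P (xcoord i) = (s^+2)%:E -> tnth m i != th ->
  (P (cut_miss i th m) <= (s^+2 / (2 * (tnth m i - th)^+2))%:E)%E.
Proof.
move=> Psym mean var neq; have miss_meas := measurable_cut_miss i th m.
case: (ltgtP (tnth m i) th) neq => // [m_lt|m_gt] _.
- have t_gt0 : 0 < th - tnth m i by rewrite subr_gt0.
  have := symmetric_tail_le Psym mean var t_gt0; rewrite addrC subrK -[(th - _)^+2]sqrrN opprB.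
  apply: le_trans; apply: le_measure; rewrite ?inE //; first exact: measurable_coord_ge.
  by move=> x; rewrite /cut_miss /= (ltW m_lt); case: lerP => //= /ltW.
- have t_gt0 : 0 < tnth m i - th by rewrite subr_gt0.
  have := symmetric_tail_le Psym mean var t_gt0.
  rewrite -(symmetric_tailN _ _ Psym) opprB addrC subrK.
  apply: le_trans; apply: le_measure; rewrite ?inE //; first exact: measurable_coord_le.
  by move=> x; rewrite /cut_miss /= [tnth m i <= th]leNgt m_gt; case: lerP.
Qed.
End SymmetricTails.

Lemma tree_cost_split (R : realFieldType) (a b : R) : 1 <= a -> 1 <= b ->
  3 * (a + b - 1)^+2 + (a^+2 * (a - 1) + b^+2 * (b - 1)) <= (a + b)^+2 * (a + b - 1).
Proof.
move=> a_ge1 b_ge1.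
have : a + b - 1 <= a * b by nra.
have : 3 * (a + b - 1) <= 3 * a + 3 * b - 2 by lra.
nra.
Qed.

Section MMDTError.
Variables (R : realType) (K d : nat) (p : 'I_K -> R) (mu : 'I_K -> d.-tuple R)
  (sigma : 'I_d -> R) (nu : 'I_K -> probability (d.-tuple R) R) (w q : R).
Hypotheses (p_ge0 : forall k, 0 <= p k) (p_le : forall k, p k <= w)
  (nu_sym : forall k, symmetric_about (nu k) (mu k))
  (sigma_gt0 : forall j, 0 < sigma j)
  (nu_mean : forall k j, ('E_(nu k)[xcoord j] = (tnth (mu k) j)%:E)%E)
  (nu_var : forall k j, variance (nu k) (xcoord j) = (sigma j ^+ 2)%:E)
  (q_le_ENR : (q%:E <= ENR mu sigma)%E) (q_gt0 : 0 < q).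
Implicit Types (N : {set 'I_K}) (i : 'I_d) (th : R).

Lemma pbar_ge0 N k : 0 <= pbar p N k.
Proof. by rewrite /pbar divr_ge0 // sumr_ge0. Qed.

(* When the weights of N sum to 0 both sides vanish, pbar being 0 by x / 0 = 0. *)
Lemma mul_sum_pbar N k : k \in N -> (\sum_(m in N) p m) * pbar p N k = p k.
Proof.
move=> kN; have [PN0|PN_neq0] := eqVneq (\sum_(m in N) p m) 0.
  by rewrite PN0 mul0r (psumr_eq0P (fun m _ => p_ge0 m) PN0).
by rewrite /pbar mulrCA divff // mulr1.
Qed.

Lemma sum_cut_miss N i th :
  (\sum_(k in N) (p k)%:E * nu k (cut_miss i th (mu k)) =
   (\sum_(m in N) p m)%:E * split_error p mu nu N i th)%E.
Proof.
rewrite /split_error ge0_sume_distrr => [|k _]; last first.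
  by rewrite mule_ge0 // lee_fin pbar_ge0.
by apply: eq_bigr => k kN; rewrite muleA -EFinM mul_sum_pbar.
Qed.

Lemma sum_cheb_bound N i th : {in N, forall k, tnth (mu k) i != th} ->
  ((\sum_(m in N) p m)%:E * cheb_bound p mu sigma N i th =
   (\sum_(k in N) p k * (sigma i ^+ 2 / (tnth (mu k) i - th)^+2))%:E)%E.
Proof.
move=> th_new; rewrite /cheb_bound -[RHS]sumEFin ge0_sume_distrr => [|k kN]; last first.
  by rewrite (negbTE (th_new k kN)) -EFinM lee_fin mulr_ge0 ?pbar_ge0 ?divr_ge0 ?sqr_ge0.
apply: eq_bigr => k kN; rewrite (negbTE (th_new k kN)) real_normK ?num_real //.
by rewrite muleA -!EFinM mul_sum_pbar.
Qed.

Lemma split_error_le_cheb N i th :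
  (split_error p mu nu N i th <= (2^-1)%:E * cheb_bound p mu sigma N i th)%E.
Proof.
rewrite /split_error /cheb_bound ge0_sume_distrr => [|k _]; last first.
  rewrite mule_ge0 ?lee_fin ?pbar_ge0 //.
  by case: ifP; rewrite ?leey // lee_fin divr_ge0 ?sqr_ge0.
apply: lee_sum => k _; have pb_ge0 := pbar_ge0 N k.
case: eqP => [_|/eqP th_new].
  have [->|pb_neq0] := eqVneq (pbar p N k) 0; first by rewrite !mul0e mule0.
  by rewrite gt0_muley ?lte_fin ?lt_def ?pb_neq0 // gt0_muley ?leey // lte_fin invr_gt0.
apply: le_trans (lee_wpmul2l _ (cut_miss_le (nu_sym k) (nu_mean k i) (nu_var k i) th_new)) _.
  by rewrite lee_fin.
rewrite -!EFinM lee_fin real_normK ?num_real // invfM.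
by rewrite !(mulrCA 2^-1).
Qed.

Lemma split_error_le_min_cheb (cheb : bool) N i th th' :
  (forall th'', admissible_threshold mu N i th'' ->
     (split_crit p mu sigma nu cheb N i th <= split_crit p mu sigma nu cheb N i th'')%E) ->
  admissible_threshold mu N i th' ->
  (split_error p mu nu N i th <= (2^-1)%:E * cheb_bound p mu sigma N i th')%E.
Proof.
move=> th_min /th_min; rewrite /split_crit; case: {th_min} cheb => crit.
  apply: le_trans (split_error_le_cheb _ _ _) _.
  by apply: lee_wpmul2l => //; rewrite lee_fin invr_ge0.
exact: le_trans crit (split_error_le_cheb _ _ _).
Qed.

Lemma exists_coord_separation k l : k != l ->
  exists j, q * sigma j ^+ 2 <= (tnth (mu k) j - tnth (mu l) j)^+2.
Proof.
move=> kl; have : (q%:E <= (pair_sep mu sigma l k)%:E)%E.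
  by apply: le_trans q_le_ENR _; apply: le_trans (bigmin_le _ l _) _; exact: bigmin_le_cond.
rewrite lee_fin => /bigmax_geP[|[j _ q_le]]; first by rewrite leNgt q_gt0.
exists j; rewrite -ler_pdivlMr ?exprn_gt0 // -[_ ^+ 2]sqrrN opprB.
by rewrite -real_normK ?num_real.
Qed.

Lemma le_axis_score N j k l : k \in N -> l \in N ->
  `|tnth (mu k) j - tnth (mu l) j| / sigma j <= axis_score mu sigma N j.
Proof.
move=> kN lN; rewrite /axis_score [leRHS]mulrC ler_pM2r ?invr_gt0 //.
apply: le_trans (le_bigmax_cond _ _ kN); exact: (le_bigmax_cond _ _ lN).
Qed.

(* The chosen axis i is at least as good as the axis j separating two means of
   N by the ENR, so the means of N spread by at least sqrt(q) sigma_i along i. *)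
Lemma exists_separated_pair_on_axis N i : (1 < #|N|)%N ->
  (forall i', axis_score mu sigma N i' <= axis_score mu sigma N i) ->
  exists k1 k2, [/\ k1 \in N, k2 \in N, tnth (mu k1) i < tnth (mu k2) i &
    q * sigma i ^+ 2 <= (tnth (mu k2) i - tnth (mu k1) i)^+2].
Proof.
move=> /card_gt1P[k0 [l0 [k0N l0N kl0]]] i_max.
have [j sep_j] := exists_coord_separation kl0.
set a := `|tnth (mu k0) j - tnth (mu l0) j| / sigma j.
have q_le_a : q <= a ^+ 2.
  by rewrite /a expr_div_n real_normK ?num_real // ler_pdivlMr ?exprn_gt0.
have a_gt0 : 0 < a.
  rewrite lt_def divr_ge0 ?normr_ge0 ?ltW // andbT; apply: contraTneq q_le_a => ->.
  by rewrite expr0n -ltNge.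
have a_le : a * sigma i <= \big[Num.max/0]_(k in N) \big[Num.max/0]_(l in N)
    `|tnth (mu k) i - tnth (mu l) i|.
  rewrite -ler_pdivlMr // mulrC; apply: le_trans (i_max j).
  exact: le_axis_score.
have ai_gt0 : 0 < a * sigma i by rewrite mulr_gt0.
move: a_le => /bigmax_geP[|[k kN /bigmax_geP[|[l lN a_le]]]]; rewrite ?leNgt ?ai_gt0 //.
have spread : q * sigma i ^+ 2 <= (tnth (mu k) i - tnth (mu l) i)^+2.
  rewrite -[(_ - _)^+2]real_normK ?num_real //.
  apply: le_trans (_ : (a * sigma i)^+2 <= _).
    by rewrite exprMn ler_wpM2r ?sqr_ge0.
  by rewrite ler_sqr ?nnegrE ?normr_ge0 ?(ltW ai_gt0).
case: (ltgtP (tnth (mu k) i) (tnth (mu l) i)) => [kl|lk|kl_eq].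
- by exists k, l; rewrite -[(tnth (mu l) i - _)^+2]sqrrN opprB.
- by exists l, k.
- by move: a_le; rewrite kl_eq subrr normr0 leNgt ai_gt0.
Qed.

Lemma node_error_le (cheb : bool) N i th : (1 < #|N|)%N ->
  (forall i', axis_score mu sigma N i' <= axis_score mu sigma N i) ->
  (forall th', admissible_threshold mu N i th' ->
     (split_crit p mu sigma nu cheb N i th <= split_crit p mu sigma nu cheb N i th')%E) ->
  (\sum_(k in N) (p k)%:E * nu k (cut_miss i th (mu k)) <=
     (20 * w / q * (#|N|%:R - 1)^+2)%:E)%E.
Proof.
move=> N_gt1 i_max th_min.
have [k1 [k2 [k1N k2N z12 spread]]] := exists_separated_pair_on_axis N_gt1 i_max.
set D := tnth (mu k2) i - tnth (mu k1) i in spread.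
have D_gt0 : 0 < D by rewrite subr_gt0.
have [th' [/andP[th'_gt th'_lt] th'_new sum_le]] :=
  exists_threshold_sum_inv_sqr_le (z := fun k => tnth (mu k) i) k1N k2N z12.
have adm : admissible_threshold mu N i th' by split; [exists k1 | exists k2].
have w_ge0 : 0 <= w := le_trans (p_ge0 k1) (p_le k1).
rewrite sum_cut_miss.
apply: le_trans (lee_wpmul2l _ (split_error_le_min_cheb th_min adm)) _.
  by rewrite lee_fin sumr_ge0.
rewrite muleCA sum_cheb_bound // -EFinM lee_fin.
have weighted : \sum_(k in N) p k * (sigma i ^+ 2 / (tnth (mu k) i - th')^+2) <=
    w * sigma i ^+ 2 * (40 * (#|N|%:R - 1)^+2 / D^+2).
  apply: le_trans (_ : \sum_(k in N) w * sigma i ^+ 2 * ((tnth (mu k) i - th')^+2)^-1 <= _).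
    apply: ler_sum => k _; rewrite mulrA ler_wpM2r ?invr_ge0 ?sqr_ge0 //.
    by rewrite ler_wpM2r ?sqr_ge0.
  by rewrite -mulr_sumr ler_wpM2l // mulr_ge0 ?sqr_ge0.
have sigma_D : sigma i ^+ 2 / D ^+ 2 <= q^-1.
  by rewrite ler_pdivrMr ?exprn_gt0 // mulrC ler_pdivlMr // mulrC.
apply: le_trans (ler_wpM2l _ weighted) _; first by rewrite invr_ge0.
have -> : 2^-1 * (w * sigma i ^+ 2 * (40 * (#|N|%:R - 1) ^+ 2 / D ^+ 2)) =
    20 * w * (#|N|%:R - 1)^+2 * (sigma i ^+ 2 / D ^+ 2) by field; rewrite gt_eqF.
rewrite [leRHS]mulrAC; apply: ler_wpM2l => //.
by rewrite mulr_ge0 ?sqr_ge0 ?mulr_ge0.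
Qed.

Lemma measurable_leaf_of (t : @dtree R K d) (P : pred 'I_K) :
  measurable [set x : d.-tuple R | P (leaf_of t x)].
Proof.
elim: t => [k|i th tl IHl tr IHr] /=.
  case: (P k); first by rewrite (_ : [set _ | true] = setT) //; apply/seteqP; split.
  by rewrite (_ : [set _ | false] = set0) //; apply/seteqP; split.
have -> : [set x | P (if tnth x i <= th then leaf_of tl x else leaf_of tr x)] =
    [set x | tnth x i <= th] `&` [set x | P (leaf_of tl x)] `|`
    ~` [set x | tnth x i <= th] `&` [set x | P (leaf_of tr x)].
  by apply/seteqP; split => x /=; case: ifP => _; [left|right|case=> -[]..].
by apply: measurableU; apply: measurableI => //; [|apply: measurableC];
  exact: measurable_coord_le.
Qed.

Definition leaf_error (t : @dtree R K d) k : \bar R :=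
  ((p k)%:E * nu k [set x | leaf_of t x != k])%E.

Lemma leaf_of_node_neq i th tl tr k :
  [set x | leaf_of (DNode i th tl tr) x != k] `<=`
  cut_miss i th (mu k) `|` [set x | leaf_of (if tnth (mu k) i <= th then tl else tr) x != k].
Proof.
move=> x /=; rewrite /cut_miss /=.
by case: (tnth x i <= th); case: (tnth (mu k) i <= th) => /= leaf_neq; [right|left|left|right].
Qed.

Lemma leaf_error_node_le i th tl tr k :
  (leaf_error (DNode i th tl tr) k <= (p k)%:E * nu k (cut_miss i th (mu k)) +
     (if (tnth (mu k) i <= th)%R then leaf_error tl k else leaf_error tr k))%E.
Proof.
rewrite -(fun_if (leaf_error^~ k)) /leaf_error -ge0_muleDr //.
apply: lee_wpmul2l; first by rewrite lee_fin.
have miss_meas := measurable_cut_miss i th (mu k).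
have sub_meas := measurable_leaf_of (if (tnth (mu k) i <= th)%R then tl else tr) (predC1 k).
apply: le_trans (measureU2 _ miss_meas sub_meas).
apply: le_measure; rewrite ?inE; last exact: leaf_of_node_neq.
- exact: (measurable_leaf_of _ (predC1 k)).
- exact: measurableU.
Qed.

Lemma big_cut_split N i th (F G : 'I_K -> \bar R) :
  (\sum_(k in N) (if (tnth (mu k) i <= th)%R then F k else G k) =
   \sum_(k in [set k in N | (tnth (mu k) i <= th)%R]%SET) F k +
   \sum_(k in [set k in N | (th < tnth (mu k) i)%R]%SET) G k)%E.
Proof.
rewrite (bigID (fun k => tnth (mu k) i <= th)) /=; congr (_ + _)%E; apply: eq_big.
- by move=> k; rewrite !inE.
- by move=> k /andP[_ ->].
- by move=> k; rewrite !inE ltNge.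
- by move=> k /andP[_ /negbTE ->].
Qed.

Lemma tree_error_le (cheb : bool) N (t : @dtree R K d) :
  mmdt_run p mu sigma nu cheb N t ->
  (\sum_(k in N) leaf_error t k <=
     (20 / 3 * w / q * (#|N|%:R ^+ 2 * (#|N|%:R - 1)))%:E)%E.
Proof.
elim => [k | {}N i th tl tr N_gt1 i_max adm th_min _ IHl _ IHr].
  rewrite big_set1 cards1 subrr !mulr0 /leaf_error.
  rewrite (_ : [set x | _] = set0) ?measure0 ?mule0 //.
  by apply/seteqP; split => x //=; rewrite eqxx.
set L := [set k in N | tnth (mu k) i <= th]%SET.
set Rt := [set k in N | th < tnth (mu k) i]%SET.
apply: le_trans; first by apply: lee_sum => k _; exact: leaf_error_node_le.
rewrite big_split big_cut_split /= -/L -/Rt.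
apply: le_trans (leeD (node_error_le N_gt1 i_max th_min) (leeD IHl IHr)) _.
rewrite -!EFinD lee_fin.
have cardN : #|N| = (#|L| + #|Rt|)%N.
  rewrite -!sum1_card (bigID (fun k => tnth (mu k) i <= th)) /=; congr (_ + _)%N;
    by apply: eq_bigl => k; rewrite !inE ?ltNge.
have L_ge1 : 1 <= #|L|%:R :> R.
  case: adm => -[k kN k_lt] _; rewrite (ler_nat R 1); apply/card_gt0P; exists k.
  by rewrite !inE kN ltW.
have Rt_ge1 : 1 <= #|Rt|%:R :> R.
  case: adm => _ [k kN k_gt]; rewrite (ler_nat R 1); apply/card_gt0P; exists k.
  by rewrite !inE kN.
have /card_gt0P[k0 _] : (0 < #|N|)%N by lia.
have F_ge0 : 0 <= 20 / 3 * w / q.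
  by rewrite divr_ge0 ?(ltW q_gt0) // mulr_ge0 // (le_trans (p_ge0 k0)).
have -> : 20 * w / q = 20 / 3 * w / q * 3 by field; rewrite gt_eqF.
rewrite cardN natrD -[20 / 3 * w / q * 3 * _]mulrA -!mulrDr.
by have := ler_wpM2l F_ge0 (tree_cost_split L_ge1 Rt_ge1).
Qed.

Lemma mix_prob_le_leaf_error (t : @dtree R K d) :
  (mix_prob p nu (fun k => [set x | mu (leaf_of t x) <> mu k]) <=
   \sum_(k in [set: 'I_K]%SET) leaf_error t k)%E.
Proof.
rewrite /mix_prob [leRHS](eq_bigl xpredT) => [|k]; last by rewrite inE.
apply: lee_sum => k _; apply: lee_wpmul2l; first by rewrite lee_fin.
apply: le_measure; rewrite ?inE.
- have -> : [set x | mu (leaf_of t x) <> mu k] = [set x | mu (leaf_of t x) != mu k].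
    by apply/seteqP; split => x /= /eqP.
  exact: (measurable_leaf_of t (fun l => mu l != mu k)).
- exact: (measurable_leaf_of t (predC1 k)).
- by move=> x /= mu_neq; apply: contra_not_neq mu_neq => ->.
Qed.
End MMDTError.

Theorem theorem7 (R : realType) (K d : nat)
  (p : 'I_K -> R) (mu : 'I_K -> d.-tuple R) (sigma : 'I_d -> R)
  (nu : 'I_K -> probability (d.-tuple R) R) (alpha beta q : R)
  (* mixture weights *)
  (hp0 : forall k, 0 <= p k) (hp1 : \sum_(k < K) p k = 1)
  (halpha : 1 <= alpha) (hpa : forall k, p k <= alpha / K%:R)
  (* each component: discrete or absolutely continuous, symmetric about its mean *)
  (hdc : forall k, discrete_law (nu k) \/ abs_continuous_law (nu k))
  (hsym : forall k, symmetric_about (nu k) (mu k))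
  (* means and shared finite coordinate-wise variances *)
  (hsig : forall j, 0 < sigma j)
  (hL2 : forall k j, xcoord j \in Lfun (nu k) 2%:E)
  (hmean : forall k j, ('E_(nu k)[xcoord j] = (tnth (mu k) j)%:E)%E)
  (hvar : forall k j, variance (nu k) (xcoord j) = (sigma j ^+ 2)%:E)
  (* beta-condition *)
  (hbeta : forall i : 'I_d,
     (sqrte (mix_expect p nu (fun k x => ((xcoord i x - tnth (mu k) i) ^+ 2)%R))
      <= beta%:E * mix_expect p nu (fun k x => (`|xcoord i x - tnth (mu k) i|)%R))%E)
  (* q = ENR(nu) > 0 *)
  (hq : ENR mu sigma = q%:E) (hq0 : 0 < q)
  (* any output tree of the MMDT algorithm (either threshold rule) *)
  (cheb : bool) (t : @dtree R K d)
  (ht : mmdt_run p mu sigma nu cheb [set: 'I_K] t) :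
  (mix_prob p nu (fun k => [set x | mu (leaf_of t x) <> mu k])
   <= ((4 + 2 * pi ^+ 2 / 3) * alpha * K%:R * (K%:R - 1) / q)%:E)%E.
Proof.
have K_gt0 : (0 < K)%N.
  case: (posnP K) => // K0; subst K.
  by move: hp1; rewrite big_ord0 => /eqP; rewrite eq_sym oner_eq0.
have alpha_ge0 : 0 <= alpha by lra.
have q_le_ENR : (q%:E <= ENR mu sigma)%E by rewrite hq.
have tree_err := tree_error_le hp0 hpa hsym hsig hmean hvar q_le_ENR hq0 ht.
have pi_const : 20 / 3 <= 4 + 2 * pi ^+ 2 / 3 :> R by have := pi_ge2 R; nra.
apply: le_trans (le_trans (mix_prob_le_leaf_error mu nu hp0 t) tree_err) _.
rewrite cardsT card_ord lee_fin.
have -> : 20 / 3 * (alpha / K%:R) / q * (K%:R ^+ 2 * (K%:R - 1)) =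
    20 / 3 * (alpha * K%:R * (K%:R - 1) / q).
  by field; rewrite gt_eqF // pnatr_eq0 -lt0n.
apply: le_trans (_ : (4 + 2 * pi ^+ 2 / 3) * (alpha * K%:R * (K%:R - 1) / q) <= _).
  by rewrite ler_wpM2r // !mulr_ge0 ?invr_ge0 ?(ltW hq0) // subr_ge0 ler1n.
by rewrite !mulrA.
Qed.
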